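(* Let $D$ be a tournament missing disjoint paths of length 2 and let $C=a_1b_1c_1,\dots,a_kb_kc_k$ be a double cycle in $\Delta(D)$. Writing $v^-$ and $v^{++}$ for $N^-_{D[K(C)]}(v)$ and $N^{++}_{D[K(C)]}(v)$, for every $t\in\{1,\dots,k\}$ (indices modulo $k$): (1) $a_t^{++}=(a_t^-\cup\{b_t\})\setminus\{a_{t+1},b_{t+1},c_{t+1},c_t\}$; (2) $c_t^{++}=(c_t^-\cup\{b_t\})\setminus\{a_{t+1},b_{t+1},c_{t+1},a_t\}$; (3) $b_t^{++}=(b_t^-\cup\{a_t,c_t\})\setminus\{a_{t+1},b_{t+1},c_{t+1}\}$.
   Context: All digraphs are finite oriented graphs; $D[X]$ is the induced subdigraph. $N^+_H(v)$, $N^-_H(v)$ are out/in-neighborhoods in $H$; $N^{++}_H(v)$ is the set of vertices $w\notin N_H^+(v)\cup\{v\}$ with $u\to w$ in $H$ for some $u\in N_H^+(v)$. A missing edge is a pair of distinct non-adjacent vertices; the missing graph is formed by the missing edges. $D$ is a tournament missing disjoint paths of length 2 if its missing graph is a vertex-disjoint union of paths each with exactly two edges. For missing edges $\{x,y\},\{a,b\}$, $\{x,y\}$ loses to $\{a,b\}$ (written $xy\to ab$) if the endpoints can be labelled so that $x\to a$, $b\notin N^+(x)\cup N^{++}(x)$, $y\to b$, $a\notin N^+(y)\cup N^{++}(y)$ (neighborhoods in $D$). $\Delta(D)$ has the missing edges as vertices and arcs $(e,e')$ whenever $e$ loses to $e'$. For missing paths $abc$, $xyz$, $abc\to xyz$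 means each of $ab,bc$ loses to each of $xy,yz$. A double cycle is a sequence $C=a_1b_1c_1,\dots,a_kb_kc_k$ ($k\ge2$) of distinct missing paths of length 2 (components of the missing graph, edges $a_ib_i,b_ic_i$) with $a_ib_ic_i\to a_{i+1}b_{i+1}c_{i+1}$ for all $i$, indices modulo $k$. $K(C)=\{a_i,b_i,c_i:1\le i\le k\}$. *)

(* A digraph on a finite vertex type V is given by an arc
   relation [arc : rel V] ([arc u v] means u -> v). *)
From mathcomp Require Import all_boot.
Set Implicit Arguments. Unset Strict Implicit. Unset Printing Implicit Defensive.

Section Digraphs.
Variable V : finType.
Variable arc : rel V.

Definition oriented : Prop :=
  (forall x, ~~ arc x x) /\ (forall x y, arc x y -> ~~ arc y x).

(* neighbourhoods in the induced subdigraph D[X] (v is assumed in X) *)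
Definition outN (X : {set V}) (v : V) : {set V} := [set u in X | arc v u].
Definition inN (X : {set V}) (v : V) : {set V} := [set u in X | arc u v].
Definition out2N (X : {set V}) (v : V) : {set V} :=
  [set w in X | [&& w \notin outN X v, w != v &
                   [exists u in outN X v, arc u w]]].

Definition missing (x y : V) : bool := [&& x != y, ~~ arc x y & ~~ arc y x].

(* a b c is a component of the missing graph which is a path with the two
   edges ab, bc *)
Definition missing_path (a b c : V) : Prop :=
  [/\ missing a b, missing b c, a != c, ~~ missing a c &
      forall x w, x \in [set a; b; c] -> missing x w -> w \in [set a; b; c]].

Definition tmdp2 : Prop :=
  oriented /\
  forall x y, missing x y ->
    exists a b c, missing_path a b c /\
      [|| (x == a) && (y == b), (x == b) && (y == a),
          (x == b) && (y == c) | (x == c) && (y == b)].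

(* {x,y} loses to {a,b} with the labelling x->a, y->b; neighbourhoods in D *)
Definition lose_lab (x y a b : V) : bool :=
  [&& arc x a, b \notin outN setT x :|: out2N setT x, arc y b &
      a \notin outN setT y :|: out2N setT y].

Definition loses (x y a b : V) : bool :=
  [|| lose_lab x y a b, lose_lab y x a b, lose_lab x y b a | lose_lab y x b a].

Definition path_beats (a b c x y z : V) : bool :=
  [&& loses a b x y, loses a b y z, loses b c x y & loses b c y z].

(* double cycle a_0 b_0 c_0, ..., a_{k-1} b_{k-1} c_{k-1}, indices mod k *)
Definition double_cycle (k : nat) (a b c : nat -> V) : Prop :=
  [/\ 2 <= k,
      forall i, i < k -> missing_path (a i) (b i) (c i),
      forall i j, i < j -> j < k -> [set a i; b i; c i] != [set a j; b j; c j] &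
      forall i, i < k -> path_beats (a i) (b i) (c i)
                         (a (i.+1 %% k)) (b (i.+1 %% k)) (c (i.+1 %% k))].

Definition KC (k : nat) (a b c : nat -> V) : {set V} :=
  \bigcup_(i < k) [set a i; b i; c i].

End Digraphs.

From mathcomp Require Import all_boot zify.
Set Implicit Arguments. Unset Strict Implicit. Unset Printing Implicit Defensive.

(* Call q far from v when q is neither an out-neighbour nor a second out-neighbour of v in D.
   Comparing the four "loses" conditions shows that a missing path ABC beats XYZ in one of two
   rigid patterns: A, C -> X, Z and B -> Y, or A, C -> Y and B -> X, Z, each of the other six
   pairs being far.  Since every vertex of K is adjacent to the triples it does not belong to,
   these patterns push the beaters of a vertex u forward along the double cycle; going once
   around from the triple of u shows that every other triple beats u exactly, i.e. by its two
   ends and not its middle, or by its middle alone.  The second out-neighbourhoods in D[K(C)]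
   of a_t, b_t, c_t are then read off from this dichotomy, the intermediate vertices of the
   required paths of length two being found in the next triple. *)

Lemma forward_closed (P : pred nat) i j :
  (forall m, i <= m < j -> P m -> P m.+1) -> i <= j -> P i -> P j.
Proof.
elim: j => [|j IHj] step; first by rewrite leqn0 => /eqP ->.
rewrite leq_eqVlt ltnS => /orP[/eqP <- //|le_ij] Pi.
apply: (step); first by rewrite le_ij /=.
by apply: IHj le_ij Pi => m /andP[im mj]; apply: step; rewrite im ltnW.
Qed.

Lemma modn_addr_neq j m k : j < k -> 0 < m < k -> (j + m) %% k != j.
Proof.
move=> jk /andP[m0 mk]; apply/eqP => jm.
have : j + m == j + 0 %[mod k] by rewrite jm addn0 modn_small.
by rewrite eqn_modDl mod0n modn_small // => /eqP m_0; rewrite m_0 in m0.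
Qed.

Lemma modn_addr_subn j t k : j <= k -> t < k -> (j + (t + (k - j)) %% k) %% k = t.
Proof. by move=> jk tk; rewrite modnDmr addnCA subnKC // modnDr modn_small. Qed.

Lemma mem_set3 (T : finType) (x y z w : T) :
  (w \in [set x; y; z]) = [|| w == x, w == y | w == z].
Proof. by rewrite !inE orbA. Qed.

Lemma set3C (T : finType) (x y z : T) : [set x; y; z] = [set z; y; x].
Proof.
by apply/setP => w; rewrite !mem_set3; case: (w == x); case: (w == z); rewrite ?orbT.
Qed.

Section Tournament.
Variables (V : finType) (arc : rel V).

Definition adj (u v : V) : bool := arc u v || arc v u.

Definition far (v q : V) : bool := q \notin outN arc setT v :|: out2N arc setT v.

Lemma adjC u v : adj u v = adj v u.
Proof. exact: orbC. Qed.

Lemma far_noarc v q : far v q -> ~~ arc v q.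
Proof. by apply: contra => vq; rewrite !inE vq. Qed.

Lemma far_adj v q : far v q -> adj v q -> arc q v.
Proof. by move/far_noarc/negbTE; rewrite /adj => ->. Qed.

Lemma out2NP (X : {set V}) v w :
  reflect [/\ w \in X, ~~ arc v w, w != v & exists2 u, u \in X & arc v u && arc u w]
    (w \in out2N arc X v).
Proof.
rewrite /out2N /outN inE.
apply: (iffP and4P) => [[wX]|[wX vw wv [u uX /andP[vu uw]]]].
  rewrite inE wX /= => vw wv /existsP[u /andP[]]; rewrite inE => /andP[uX vu] uw.
  by split=> //; exists u; rewrite ?vu.
split=> //; first by rewrite inE wX.
by apply/existsP; exists u; rewrite !inE uX vu.
Qed.

Lemma out2N_notfar (X : {set V}) v w : w \in out2N arc X v -> ~~ far v w.
Proof.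
case/out2NP=> _ vw wv [u _ /andP[vu uw]]; rewrite negbK inE; apply/orP; right.
by apply/out2NP; split; rewrite ?in_setT //; exists u; rewrite ?in_setT ?vu.
Qed.

Lemma loses_cases x y p q :
  loses arc x y p q ->
  [&& arc x p, far x q, arc y q & far y p] || [&& arc x q, far x p, arc y p & far y q].
Proof. by rewrite /far; case/or4P=> /and4P[-> -> -> ->]; rewrite ?orbT. Qed.

Definition dominated (A B C u : V) : bool := arc B u || arc A u && arc C u.
Definition strongly_dominated (A B C u : V) : bool := arc B u && (arc A u || arc C u).
Definition exactly_dominated (A B C u : V) : bool :=
  dominated A B C u && ~~ strongly_dominated A B C u.

Lemma exactly_dominatedP A B C u :
  exactly_dominated A B C u -> arc C u = arc A u /\ arc B u = ~~ arc A u.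
Proof.
rewrite /exactly_dominated /dominated /strongly_dominated.
by case: (arc A u); case: (arc B u); case: (arc C u).
Qed.

Lemma exactly_dominatedC A B C u : exactly_dominated A B C u = exactly_dominated C B A u.
Proof.
by rewrite /exactly_dominated /dominated /strongly_dominated (andbC (arc A u)) (orbC (arc A u)).
Qed.

Definition straight_beat (A B C X Y Z : V) : Prop :=
  [/\ arc A X, arc A Z, arc C X, arc C Z & arc B Y] /\
  [/\ far A Y, far C Y, far B X & far B Z].
Definition crossed_beat (A B C X Y Z : V) : Prop :=
  [/\ arc A Y, arc C Y, arc B X & arc B Z] /\
  [/\ far A X, far A Z, far C X, far C Z & far B Y].
Definition beat_pattern (A B C X Y Z : V) : Prop :=
  straight_beat A B C X Y Z \/ crossed_beat A B C X Y Z.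

Lemma path_beats_pattern A B C X Y Z :
  path_beats arc A B C X Y Z -> beat_pattern A B C X Y Z.
Proof.
case/and4P=> /loses_cases + /loses_cases + /loses_cases + /loses_cases.
do 4 case/orP=> /and4P[? ? ? ?]; first [by left | by right | exfalso].
all: (* each remaining combination asks for an arc from v to a vertex far from v *)
  match goal with
  | hf : is_true (far ?v ?q), ha : is_true (arc ?v ?q) |- _ =>
      by move: (far_noarc hf); rewrite ha
  end.
Qed.

Section Pattern.
Variables A B C X Y Z : V.
Hypothesis pattern : beat_pattern A B C X Y Z.

Lemma pattern_swap : beat_pattern C B A X Y Z.
Proof. by case: pattern => [[[? ? ? ? ?] [? ? ? ?]]|[[? ? ? ?] [? ? ? ? ?]]]; [left|right]. Qed.

Lemma pattern_arc_or_far p q :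
  p \in [set A; B; C] -> q \in [set X; Y; Z] -> arc p q || far p q.
Proof.
rewrite !mem_set3 => /or3P[]/eqP-> /or3P[]/eqP->; apply/orP;
  by case: pattern => [[[? ? ? ? ?] [? ? ? ?]]|[[? ? ? ?] [? ? ? ? ?]]]; first [by left | by right].
Qed.

Lemma pattern_end_witness : exists2 P, P \in [set X; Y; Z] & arc A P && far B P.
Proof.
case: pattern => [[[AX _ _ _ _] [_ _ fBX _]]|[[AY _ _ _] [_ _ _ _ fBY]]].
  by exists X; rewrite ?mem_set3 ?eqxx ?AX.
by exists Y; rewrite ?mem_set3 ?eqxx ?orbT ?AY.
Qed.

Lemma pattern_mid_witness : exists2 P, P \in [set X; Y; Z] & [&& arc B P, far A P & far C P].
Proof.
case: pattern => [[[_ _ _ _ BY] [fAY fCY _ _]]|[[_ _ BX _] [fAX _ fCX _ _]]].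
  by exists Y; rewrite ?mem_set3 ?eqxx ?orbT ?BY ?fAY.
by exists X; rewrite ?mem_set3 ?eqxx ?BX ?fAX.
Qed.

(* In both patterns the vertices far from a single vertex of the first triple are either Y alone
   or X and Z, so making them beat w makes w dominated. *)
Lemma pattern_dominated p w :
  p \in [set A; B; C] -> (forall q, q \in [set X; Y; Z] -> far p q -> arc q w) ->
  dominated X Y Z w.
Proof.
have [SX SY SZ] : [/\ X \in [set X; Y; Z], Y \in [set X; Y; Z] & Z \in [set X; Y; Z]].
  by rewrite !mem_set3 !eqxx !orbT.
rewrite mem_set3 => /or3P[]/eqP-> farw; apply/orP;
  case: pattern => [[_ [? ? ? ?]]|[_ [? ? ? ? ?]]];
  first [by left; apply: farw | by right; apply/andP; split; apply: farw].
Qed.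

Lemma pattern_strongly_dominated p w :
  p \in [set A; C] -> (forall q, q \in [set X; Y; Z] -> far B q || far p q -> arc q w) ->
  strongly_dominated X Y Z w.
Proof.
have [SX SY SZ] : [/\ X \in [set X; Y; Z], Y \in [set X; Y; Z] & Z \in [set X; Y; Z]].
  by rewrite !mem_set3 !eqxx !orbT.
rewrite !inE => /orP[]/eqP-> farw; apply/andP;
  case: pattern => [[_ [? ? ? ?]]|[_ [? ? ? ? ?]]];
  by split; [|apply/orP; left]; apply: farw => //; apply/orP; first [by left | by right].
Qed.

Lemma pattern_exactly_dominated u : u \in [set X; Y; Z] -> exactly_dominated A B C u.
Proof.
rewrite /exactly_dominated /dominated /strongly_dominated mem_set3 => /or3P[]/eqP->;
  case: pattern => [[[AX AZ CX CZ BY] [fAY fCY fBX fBZ]]|[[AY CY BX BZ] [fAX fAZ fCX fCZ fBY]]].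
- by rewrite AX CX (negbTE (far_noarc fBX)).
- by rewrite BX (negbTE (far_noarc fAX)) (negbTE (far_noarc fCX)).
- by rewrite BY (negbTE (far_noarc fAY)) (negbTE (far_noarc fCY)).
- by rewrite AY CY (negbTE (far_noarc fBY)).
- by rewrite AZ CZ (negbTE (far_noarc fBZ)).
- by rewrite BZ (negbTE (far_noarc fAZ)) (negbTE (far_noarc fCZ)).
Qed.

End Pattern.

Lemma missingC x y : missing arc x y = missing arc y x.
Proof. by rewrite /missing eq_sym (andbC (~~ arc x y)). Qed.

Lemma missing_path_sub A B C A' B' C' v :
  missing_path arc A B C -> missing_path arc A' B' C' ->
  v \in [set A; B; C] -> v \in [set A'; B'; C'] -> [set A; B; C] \subset [set A'; B'; C'].
Proof.
move=> [mAB mBC _ _ _] [_ _ _ _ closed] vT vT'.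
have mBA : missing arc B A by rewrite missingC.
have mCB : missing arc C B by rewrite missingC.
have [TA' TB' TC'] :
    [/\ A \in [set A'; B'; C'], B \in [set A'; B'; C'] & C \in [set A'; B'; C']].
  move: vT; rewrite mem_set3 => /or3P[]/eqP ev; rewrite ev in vT'.
  - by have TB' := closed _ _ vT' mAB; split; rewrite // (closed _ _ TB' mBC).
  - by split; rewrite // ?(closed _ _ vT' mBA) ?(closed _ _ vT' mBC).
  - by have TB' := closed _ _ vT' mCB; split; rewrite // (closed _ _ TB' mBA).
by apply/subsetP => w; rewrite mem_set3 => /or3P[]/eqP->.
Qed.

Record consecutive (K : {set V}) (A B C X Y Z : V) : Prop := Consecutive {
  consecutive_pattern : beat_pattern A B C X Y Z;
  consecutive_missingAB : missing arc A B;
  consecutive_missingBC : missing arc B C;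
  consecutive_subT : [set A; B; C] \subset K;
  consecutive_subS : [set X; Y; Z] \subset K;
  consecutive_exactly_dominated :
    forall w, w \in K -> w \notin [set A; B; C] -> exactly_dominated A B C w;
  consecutive_adjT :
    forall p w, p \in [set A; B; C] -> w \in K -> w \notin [set A; B; C] -> adj p w;
  consecutive_adjS :
    forall q w, q \in [set X; Y; Z] -> w \in K -> w \notin [set X; Y; Z] -> adj q w }.

Lemma consecutive_swap K A B C X Y Z :
  consecutive K A B C X Y Z -> consecutive K C B A X Y Z.
Proof.
case=> pat mAB mBC sT sS ex aT aS; split; rewrite ?(set3C C B A) //.
- exact: pattern_swap.
- by rewrite missingC.
- by rewrite missingC.
- by move=> w wK wT; rewrite -exactly_dominatedC; apply: ex.
Qed.

Hypothesis arc_oriented : oriented arc.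

Lemma far_beats v q w : far v q -> (v == w) || arc v w -> adj w q -> arc q w.
Proof.
move=> fvq /orP[/eqP <-|vw]; first exact: far_adj.
case/orP=> // wq; exfalso; have [qv|qv] := eqVneq q v.
  by move: wq; rewrite qv; apply/negP; exact: arc_oriented.2 _ _ vw.
have nvq := far_noarc fvq.
move/negP: fvq; apply; rewrite inE; apply/orP; right; apply/out2NP.
by split; rewrite ?in_setT //; exists w; rewrite ?in_setT ?vw.
Qed.

Section Step.
Variables A B C X Y Z u : V.
Hypothesis pattern : beat_pattern A B C X Y Z.
Hypothesis adj_next : forall q, q \in [set X; Y; Z] -> adj u q.

Lemma triple_dominated_next : u \in [set A; B; C] -> dominated X Y Z u.
Proof.
move=> uT; apply: (pattern_dominated pattern uT) => q qS fq.
by apply: far_beats fq _ (adj_next qS); rewrite eqxx.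
Qed.

Lemma dominated_next : dominated A B C u -> dominated X Y Z u.
Proof.
case/orP=> [Bu|/andP[Au _]];
  [apply: (pattern_dominated pattern (p := B)) | apply: (pattern_dominated pattern (p := A))];
  rewrite ?mem_set3 ?eqxx ?orbT // => q qS fq;
  by apply: far_beats fq _ (adj_next qS); rewrite ?Bu ?Au orbT.
Qed.

Lemma strongly_dominated_next : strongly_dominated A B C u -> strongly_dominated X Y Z u.
Proof.
case/andP=> Bu ACu; have [p pAC pu] : exists2 p, p \in [set A; C] & arc p u.
  by case/orP: ACu => ?; [exists A | exists C]; rewrite ?inE ?eqxx ?orbT.
apply: (pattern_strongly_dominated pattern pAC) => q qS /orP[] fq;
  by apply: far_beats fq _ (adj_next qS); rewrite ?Bu ?pu orbT.
Qed.

End Step.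

Section Consecutive.
Variables (K : {set V}) (A B C X Y Z : V).
Hypothesis cons : consecutive K A B C X Y Z.

Lemma out2N_end_sub w :
  w \in out2N arc K A ->
  [&& w \notin [set X; Y; Z], w != C & (w \in inN arc K A) || (w == B)].
Proof.
case: cons => pat /and3P[_ nAB _] _ _ _ ex aT _; have [irr asym] := arc_oriented.
move=> w2; have nfw := out2N_notfar w2; case/out2NP: w2 => wK nAw wA [u uK /andP[Au uw]].
have TA : A \in [set A; B; C] by rewrite mem_set3 eqxx.
have wS : w \notin [set X; Y; Z].
  by apply: contra nfw => wS; move: (pattern_arc_or_far pat TA wS); rewrite (negbTE nAw).
have wC : w != C.
  apply/negP => /eqP eC; rewrite eC in uw.
  have uT : u \notin [set A; B; C].
    rewrite mem_set3; apply/or3P; case=> /eqP eu; rewrite eu in Au uw.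
    - exact: (negP (irr A)).
    - exact: (negP nAB).
    - exact: (negP (irr C)).
  have [CuAu _] := exactly_dominatedP (ex u uK uT).
  by move: (asym _ _ uw); rewrite CuAu Au.
rewrite wS wC /=; have [wT|wT] := boolP (w \in [set A; B; C]).
  by move: wT; rewrite mem_set3 (negbTE wA) (negbTE wC) orbF /= => ->; rewrite orbT.
by rewrite inE wK /=; move: (aT _ _ TA wK wT); rewrite /adj (negbTE nAw) /= => ->.
Qed.

Lemma out2N_end_sup w :
  w \notin [set X; Y; Z] -> w != C -> (w \in inN arc K A) || (w == B) ->
  w \in out2N arc K A.
Proof.
case: cons => pat /and3P[AB nAB nBA] _ sT sS ex _ aS; have [irr asym] := arc_oriented.
move=> wS wC wAB.
have [wK nAw wA Bw] : [/\ w \in K, ~~ arc A w, w != A & (B == w) || arc B w].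
  case/orP: wAB => [|/eqP ->]; last first.
    by split; rewrite ?eqxx 1?eq_sym //; apply: (subsetP sT); rewrite mem_set3 eqxx orbT.
  rewrite inE => /andP[wK wA]; have nAw := asym _ _ wA.
  have wT : w \notin [set A; B; C].
    rewrite mem_set3; apply/or3P; case=> /eqP ew; rewrite ew in wA wC.
    - exact: (negP (irr A)).
    - exact: (negP nBA).
    - by rewrite eqxx in wC.
  have [_ Bw] := exactly_dominatedP (ex w wK wT).
  by split; rewrite ?Bw ?nAw ?orbT //; apply: contraTneq wA => ->; apply: irr.
have [P PS /andP[AP fBP]] := pattern_end_witness pat.
apply/out2NP; split=> //; exists P; first exact: (subsetP sS).
by rewrite AP; apply: far_beats fBP Bw _; rewrite adjC; apply: aS PS wK wS.
Qed.

Lemma out2N_end : out2N arc K A = (inN arc K A :|: [set B]) :\: [set X; Y; Z; C].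
Proof.
apply/setP => w; rewrite in_setD (in_setU w (inN arc K A)) in_set1.
have -> : (w \in [set X; Y; Z; C]) = (w \in [set X; Y; Z]) || (w == C) by rewrite !inE.
rewrite negb_or -andbA.
by apply/idP/idP => [/out2N_end_sub|/and3P[]]; last exact: out2N_end_sup.
Qed.

Lemma out2N_mid_sub w :
  w \in out2N arc K B ->
  (w \notin [set X; Y; Z]) && ((w \in inN arc K B) || ((w == A) || (w == C))).
Proof.
case: cons => pat _ _ _ _ _ aT _.
move=> w2; have nfw := out2N_notfar w2; case/out2NP: w2 => wK nBw wB _.
have TB : B \in [set A; B; C] by rewrite mem_set3 eqxx orbT.
have wS : w \notin [set X; Y; Z].
  by apply: contra nfw => wS; move: (pattern_arc_or_far pat TB wS); rewrite (negbTE nBw).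
rewrite wS /=; have [wT|wT] := boolP (w \in [set A; B; C]).
  by move: wT; rewrite mem_set3 (negbTE wB) /= => ->; rewrite orbT.
by rewrite inE wK /=; move: (aT _ _ TB wK wT); rewrite /adj (negbTE nBw) /= => ->.
Qed.

Lemma out2N_mid_sup w :
  w \notin [set X; Y; Z] -> (w \in inN arc K B) || ((w == A) || (w == C)) ->
  w \in out2N arc K B.
Proof.
case: cons => pat /and3P[AB nAB nBA] /and3P[BC nBC nCB] sT sS ex _ aS.
have [irr asym] := arc_oriented.
have TK p : p \in [set A; B; C] -> p \in K by apply: (subsetP sT).
move=> wS wBAC.
have [wK nBw wB [p pAC pw]] : [/\ w \in K, ~~ arc B w, w != B &
    exists2 p, p \in [set A; C] & (p == w) || arc p w].
  case/or3P: wBAC => [|/eqP->|/eqP->].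
  - rewrite inE => /andP[wK wB]; have wT : w \notin [set A; B; C].
      rewrite mem_set3; apply/or3P; case=> /eqP ew; rewrite ew in wB.
      + exact: (negP nAB).
      + exact: (negP (irr B)).
      + exact: (negP nCB).
    have [_ BwAw] := exactly_dominatedP (ex w wK wT).
    split; rewrite ?asym //; first by apply: contraTneq wB => ->; apply: irr.
    by exists A; rewrite ?inE ?eqxx // -[arc A w]negbK -BwAw (asym _ _ wB) orbT.
  - by split; rewrite ?TK ?mem_set3 ?eqxx //; exists A; rewrite ?inE ?eqxx.
  - split; rewrite ?TK ?mem_set3 ?eqxx ?orbT // 1?eq_sym //.
    by exists C; rewrite ?inE ?eqxx ?orbT.
have [P PS /and3P[BP fAP fCP]] := pattern_mid_witness pat.
have fpP : far p P by case/set2P: pAC => ->.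
apply/out2NP; split=> //; exists P; first exact: (subsetP sS).
by rewrite BP; apply: far_beats fpP pw _; rewrite adjC; apply: aS PS wK wS.
Qed.

Lemma out2N_mid : out2N arc K B = (inN arc K B :|: [set A; C]) :\: [set X; Y; Z].
Proof.
apply/setP => w; rewrite in_setD (in_setU w (inN arc K B)) in_set2.
by apply/idP/idP => [/out2N_mid_sub|/andP[]]; last exact: out2N_mid_sup.
Qed.

End Consecutive.

Section DoubleCycle.
Variables (k : nat) (a b c : nat -> V).
Hypothesis cycle : double_cycle arc k a b c.

Lemma cycle_triples_disjoint i j :
  i < k -> j < k -> i != j -> [disjoint [set a i; b i; c i] & [set a j; b j; c j]].
Proof.
case: cycle => _ mp distinct _ ik jk ij; apply/pred0P => v /=; apply/negP => /andP[vi vj].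
have sij := missing_path_sub (mp i ik) (mp j jk) vi vj.
have sji := missing_path_sub (mp j jk) (mp i ik) vj vi.
have eij : [set a i; b i; c i] = [set a j; b j; c j] by apply/eqP; rewrite eqEsubset sij sji.
by case: ltngtP ij => // [ltij|ltji] _;
  [move: (distinct _ _ ltij jk) | move: (distinct _ _ ltji ik)]; rewrite eij eqxx.
Qed.

Lemma cycle_triples_adj i j p q :
  i < k -> j < k -> i != j -> p \in [set a i; b i; c i] -> q \in [set a j; b j; c j] ->
  adj p q.
Proof.
move=> ik jk ij pi qj; have dij := cycle_triples_disjoint ik jk ij.
have pq : p != q by apply: contraTneq qj => <-; rewrite (disjointFr dij pi).
have [_ mp _ _] := cycle; have [_ _ _ _ closed] := mp i ik.
have nm : ~~ missing arc p q.
  by apply: contraL qj => /(closed _ _ pi) /(disjointFr dij) ->.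
by move: nm; rewrite /missing pq /= negb_and !negbK.
Qed.

Lemma cycle_pattern i :
  i < k -> beat_pattern (a i) (b i) (c i) (a (i.+1 %% k)) (b (i.+1 %% k)) (c (i.+1 %% k)).
Proof. by case: cycle => _ _ _ beats ik; apply: path_beats_pattern; apply: beats. Qed.

Lemma exactly_dominated_outside j t u :
  j < k -> t < k -> t != j -> u \in [set a j; b j; c j] ->
  exactly_dominated (a t) (b t) (c t) u.
Proof.
move=> jk tk tj uj; have k0 : 0 < k := leq_ltn_trans (leq0n j) jk.
pose e m := (j + m) %% k.
have ek m : e m < k by rewrite ltn_pmod.
have e0 : e 0 = j by rewrite /e addn0 modn_small.
have ek1 : e k.-1.+1 = j by rewrite prednK // /e modnDr modn_small.
have pat m : beat_pattern (a (e m)) (b (e m)) (c (e m)) (a (e m.+1)) (b (e m.+1)) (c (e m.+1)).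
  have -> : e m.+1 = (e m).+1 %% k by rewrite /e addnS -[(_ %% k).+1]addn1 modnDml addn1.
  exact: cycle_pattern.
have adj_u m q : 0 < m < k -> q \in [set a (e m); b (e m); c (e m)] -> adj u q.
  by move=> mk; apply: (cycle_triples_adj jk (ek m) _ uj); rewrite eq_sym (modn_addr_neq jk mk).
(* Walk around the cycle from triple j + 1: dominance of u holds there (triple j beats it) and
   spreads forward, while strong dominance would spread up to triple j - 1, which beats the
   triple of u and therefore dominates u only exactly. *)
pose D m := dominated (a (e m)) (b (e m)) (c (e m)) u.
pose G m := strongly_dominated (a (e m)) (b (e m)) (c (e m)) u.
have dominated_u m : 0 < m < k -> D m.
  case/andP=> m0 mk; apply: (forward_closed (P := D)) m0 _.
    move=> i /andP[i1 im] Di; apply: dominated_next (pat i) _ Di.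
    by move=> q; apply: adj_u; lia.
  apply: triple_dominated_next (pat 0) _ _; last by rewrite e0.
  by move=> q; apply: adj_u; lia.
have not_strongly_u m : 0 < m < k -> ~~ G m.
  case/andP=> m0 mk; have : ~~ G k.-1.
    have := pattern_exactly_dominated (pat k.-1) (u := u).
    by rewrite ek1 => /(_ uj) /andP[].
  apply: contra => Gm; apply: (forward_closed (P := G)) _ _ Gm; last by rewrite -ltnS prednK.
  move=> i /andP[mi ik] Gi; apply: strongly_dominated_next (pat i) _ Gi.
  by move=> q; apply: adj_u; lia.
pose m := (t + (k - j)) %% k.
have em : e m = t by rewrite /e modn_addr_subn // ltnW.
have m0 : 0 < m by rewrite lt0n; apply: contra tj => /eqP m_0; rewrite -em m_0 e0.
have mk : 0 < m < k by rewrite m0 ltn_pmod.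
by rewrite -em; apply/andP; split; [apply: dominated_u | apply: not_strongly_u].
Qed.

Lemma cycle_consecutive t : t < k ->
  consecutive (KC k a b c) (a t) (b t) (c t) (a (t.+1 %% k)) (b (t.+1 %% k)) (c (t.+1 %% k)).
Proof.
move=> tk; have [k2 mp _ _] := cycle; have [mAB mBC _ _ _] := mp t tk.
have sk : t.+1 %% k < k by rewrite ltn_pmod // ltnW.
have sub_KC i : i < k -> [set a i; b i; c i] \subset KC k a b c.
  by move=> ik; apply/subsetP => v vi; apply/bigcupP; exists (Ordinal ik).
have in_other w i : w \in KC k a b c -> w \notin [set a i; b i; c i] ->
    exists2 j, j < k & (j != i) && (w \in [set a j; b j; c j]).
  case/bigcupP=> [[j jk]] _ wj wi; exists j; rewrite // wj andbT.
  by apply: contraNneq wi => <-.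
split; rewrite ?sub_KC //.
- exact: cycle_pattern.
- move=> w /in_other/[apply] [[j jk /andP[jt wj]]].
  by apply: exactly_dominated_outside jk tk _ wj; rewrite eq_sym.
- move=> p w pt /in_other/[apply] [[j jk /andP[jt wj]]].
  by apply: cycle_triples_adj tk jk _ pt wj; rewrite eq_sym.
- move=> q w qs /in_other/[apply] [[j jk /andP[js wj]]].
  by apply: cycle_triples_adj sk jk _ qs wj; rewrite eq_sym.
Qed.

End DoubleCycle.

End Tournament.

Theorem lemma4p10 (V : finType) (arc : rel V) (k : nat) (a b c : nat -> V) :
  tmdp2 arc -> double_cycle arc k a b c ->
  forall t, t < k ->
    let K := KC k a b c in
    let s := t.+1 %% k in
    [/\ out2N arc K (a t) =
          (inN arc K (a t) :|: [set b t]) :\: [set a s; b s; c s; c t],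
        out2N arc K (c t) =
          (inN arc K (c t) :|: [set b t]) :\: [set a s; b s; c s; a t] &
        out2N arc K (b t) =
          (inN arc K (b t) :|: [set a t; c t]) :\: [set a s; b s; c s]].
Proof.
move=> [oriented_arc _] cycle t tk K s.
have cons := cycle_consecutive oriented_arc cycle tk.
split.
- exact: out2N_end cons.
- exact: out2N_end (consecutive_swap cons).
- exact: out2N_mid cons.
Qed.
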